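(* Let $G\sim G(p,c/p)$ with $c=\Omega(p^{3/4+\epsilon'})$ for some $\epsilon'>0$. Partition the vertex set into three parts $A,B,C$ each of size $p/3$, let $\gamma=c^2/(6p)$, and let $m_{A,C}$ be the number of pairs $(a,c_0)\in A\times C$ such that at least $\gamma$ nodes of $B$ are adjacent to both $a$ and $c_0$. Then $$\Pr\Big(m_{A,C}\le\tfrac12(p/3)^2\Big)\le\frac{p}{3}\exp\!\Big(-\frac{p}{36}\Big).$$
   Context: $G(p,c/p)$ is the Erdős–Rényi random graph on $p$ vertices with independent edge probability $c/p$. *)

From HB Require Import structures.
From mathcomp Require Import all_boot all_order all_algebra.
From mathcomp Require Import reals.
From mathcomp Require Import sequences exp.
Set Implicit Arguments. Unset Strict Implicit. Unset Printing Implicit Defensive.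
Import Order.TTheory GRing.Theory Num.Theory.
Local Open Scope ring_scope.

(* A simple graph on vertex set 'I_p is given by its edge set E, a set of
   2-element subsets of 'I_p. *)
Definition pairs2 (p : nat) : {set {set 'I_p}} := [set e : {set 'I_p} | #|e| == 2%N].

Definition adj (p : nat) (E : {set {set 'I_p}}) (u v : 'I_p) : bool :=
  (u != v) && ([set u; v] \in E).

(* Probability mass of the edge set E in the Erdos-Renyi model G(p,q):
   each of the 2-element subsets is an edge independently with prob. q. *)
Definition gnp_mass (R : realType) (p : nat) (q : R) (E : {set {set 'I_p}}) : R :=
  if E \subset pairs2 p then
    \prod_(e in pairs2 p) (if e \in E then q else 1 - q)
  else 0.

Definition gnp_prob (R : realType) (p : nat) (q : R)
  (P : pred {set {set 'I_p}}) : R :=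
  \sum_(E | P E) gnp_mass q E.

Definition codeg_in (p : nat) (E : {set {set 'I_p}}) (B : {set 'I_p}) (a c0 : 'I_p) : nat :=
  #|[set b in B | adj E a b && adj E c0 b]|.

Definition m_AC (R : realType) (p : nat) (E : {set {set 'I_p}})
  (A B C : {set 'I_p}) (gamma : R) : nat :=
  #|[set x : 'I_p * 'I_p | [&& x.1 \in A, x.2 \in C &
                              gamma <= (codeg_in E B x.1 x.2)%:R]]|.

From HB Require Import structures.
From mathcomp Require Import all_boot all_order all_algebra.
From mathcomp Require Import reals.
From mathcomp Require Import sequences exp.
From mathcomp Require Import ring lra zify.
Set Implicit Arguments. Unset Strict Implicit. Unset Printing Implicit Defensive.
Import Order.TTheory GRing.Theory Num.Theory.
Local Open Scope ring_scope.

(* Write q = c/p and n = p/3.  If m_{A,C} <= n^2/2, then either a quarter of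
   the vertices of A have fewer than (4/5) n q neighbours in B, or some a in A of
   larger degree has, for a quarter of the c in C, fewer than gamma = n q^2 / 2
   common neighbours with c: otherwise more than (3n/4)^2 > n^2/2 pairs are good.
   A Chernoff bound (through the moment E[s^X], s < 1) makes each single
   degree, resp. codegree given the edges between a and B, atypical with
   probability at most 1/60 once n q^2 >= 6000.  These events are determined by
   disjoint sets of edges, so Markov's inequality for 16^(number of atypical
   events) bounds the probability that a quarter of them occur by
   ((1 + 15/60)/2)^n <= e^(-n/4).  A union bound over a gives
   (1 + n) e^(-n/4) <= n e^(-n/12), and c >= K p^(3/4+eps') yields
   c^2 >= 18000 p for large p. *)

Lemma setI_subset_disjoint (T : finType) (E J1 J2 : {set T}) :
  E \subset J1 -> [disjoint J1 & J2] -> E :&: J2 = set0.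
Proof. by move=> sE dJ; apply/disjoint_setI0/(disjointWl sE). Qed.

Lemma sum_subsets_setU (R : nmodType) (T : finType) (J1 J2 : {set T})
    (g : {set T} -> R) : [disjoint J1 & J2] ->
  \sum_(E : {set T} | E \subset J1 :|: J2) g E =
  \sum_(E1 : {set T} | E1 \subset J1) \sum_(E2 : {set T} | E2 \subset J2) g (E1 :|: E2).
Proof.
move=> dJ; rewrite pair_big_dep /=.
rewrite (reindex_onto (fun x => x.1 :|: x.2) (fun E => (E :&: J1, E :&: J2))) /=;
  last by move=> E sE; rewrite -setIUr; apply/setIidPl.
apply: eq_bigl => -[E1 E2] /=; apply/idP/idP.
- by case/andP=> _ /eqP[<- <-]; rewrite !subsetIr.
- case/andP=> s1 s2; rewrite setUSS //=; apply/eqP; congr pair; rewrite setIUl.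
  + by rewrite (setIidPl s1) (setI_subset_disjoint s2) ?setU0 // disjoint_sym.
  + by rewrite (setIidPl s2) (setI_subset_disjoint s1 dJ) set0U.
Qed.

Lemma prodr_if_card (R : comPzSemiRingType) (I : finType) (S : {set I})
    (P : pred I) (s : R) :
  \prod_(i in S) (if P i then s else 1) = s ^+ #|[set i in S | P i]|.
Proof. by rewrite -big_mkcondr -prodr_const; apply: eq_bigl => i; rewrite !inE. Qed.

Section ExpBounds.
Variable R : realType.
Implicit Types (x s t : R).

Lemma lerXn_expR x n : -1 <= x -> (1 + x) ^+ n <= expR (x * n%:R).
Proof.
move=> x_ge; rewrite mulrC expRM_natl lerXn2r ?nnegrE ?expR_ge0 ?expR_ge1Dx //.
lra.
Qed.

Lemma lt_indicator_le s t (X : nat) : 0 < s <= 1 ->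
  (X%:R < t)%R%:R <= s ^+ X * s^-1 ^+ (Num.truncn t).+1.
Proof.
case/andP=> s_gt0 s_le1; have [Xt|_] := ltP;
  last by rewrite mulr_ge0 ?exprn_ge0 ?invr_ge0 ?ltW.
have XN : (X <= (Num.truncn t).+1)%N.
  by rewrite -(ler_nat R); apply/ltW/(lt_trans Xt); rewrite truncnS_gt.
rewrite -(mulfV (expf_neq0 (Num.truncn t).+1 (lt0r_neq0 s_gt0))) exprVn ler_wpM2r //.
  by rewrite invr_ge0 exprn_ge0 ?ltW.
exact: ler_wiXn2l (ltW s_gt0) s_le1 _ _ XN.
Qed.

Lemma ler_indicator (b : bool) x : 0 <= x -> (b -> 1 <= x) -> b%:R <= x.
Proof. by case: b => [_ /(_ isT)|]. Qed.

Lemma quarter_indicator_le (n L : nat) : (n <= 4 * L)%N%:R <= (16 : R) ^+ L / 2 ^+ n.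
Proof.
have [nL|_] := leqP; last by rewrite divr_ge0 ?exprn_ge0.
have -> : (16 : R) = 2 ^+ 4 by rewrite -natrX.
by rewrite ler_pdivlMr ?exprn_gt0 // mul1r -exprM ler_eXn2l ?ltr1n.
Qed.

End ExpBounds.

Section BernoulliSubsets.
Variables (R : realType) (T : finType) (q : R).
Implicit Types (J K E : {set T}) (f g : {set T} -> R).

Definition bern_weight J E : R := \prod_(e in J) (if e \in E then q else 1 - q).

Definition bern_exp J f : R := \sum_(E : {set T} | E \subset J) bern_weight J E * f E.

Lemma bern_weightU J1 J2 E1 E2 : [disjoint J1 & J2] ->
  E1 \subset J1 -> E2 \subset J2 ->
  bern_weight (J1 :|: J2) (E1 :|: E2) = bern_weight J1 E1 * bern_weight J2 E2.
Proof.
move=> dJ s1 s2; rewrite /bern_weight (eq_bigl [predU J1 & J2]) ?bigU //=;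
  last by move=> x; rewrite !inE.
congr (_ * _); apply: eq_bigr => e eJ; rewrite inE.
- by rewrite (contraFF (subsetP s2 e) (disjointFr dJ eJ)) orbF.
- by rewrite (contraFF (subsetP s1 e) (disjointFl dJ eJ)).
Qed.

Lemma bern_expU J1 J2 f : [disjoint J1 & J2] ->
  bern_exp (J1 :|: J2) f = bern_exp J1 (fun E1 => bern_exp J2 (fun E2 => f (E1 :|: E2))).
Proof.
move=> dJ; rewrite /bern_exp sum_subsets_setU //; apply: eq_bigr => E1 s1.
by rewrite big_distrr /=; apply: eq_bigr => E2 s2; rewrite bern_weightU // mulrA.
Qed.

Lemma bern_exp0 f : bern_exp set0 f = f set0.
Proof.
rewrite /bern_exp (bigD1 set0) ?sub0set //= big1 ?addr0.
  by rewrite /bern_weight big_set0 mul1r.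
by move=> E /andP[]; rewrite subset0 => ->.
Qed.

Lemma bern_exp1 e f : bern_exp [set e] f = q * f [set e] + (1 - q) * f set0.
Proof.
rewrite /bern_exp (eq_bigl (fun E => E \in powerset [set e]));
  last by move=> E; rewrite inE.
rewrite powerset1 big_setU1 /=;
  last by rewrite inE eq_sym; apply/set0Pn; exists e; rewrite inE.
by rewrite big_set1 /bern_weight !big_set1 !inE eqxx addrC.
Qed.

Lemma eq_bern_exp J f g : (forall E, E \subset J -> f E = g E) ->
  bern_exp J f = bern_exp J g.
Proof. by move=> fg; apply: eq_bigr => E sE; rewrite fg. Qed.

Lemma bern_expZl J a f : bern_exp J (fun E => a * f E) = a * bern_exp J f.
Proof. by rewrite /bern_exp big_distrr; apply: eq_bigr => E _; rewrite mulrCA. Qed.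

Lemma bern_expZr J a f : bern_exp J (fun E => f E * a) = bern_exp J f * a.
Proof. by rewrite mulrC -bern_expZl; apply: eq_bern_exp => E _; rewrite mulrC. Qed.

Lemma bern_expD J f g : bern_exp J (fun E => f E + g E) = bern_exp J f + bern_exp J g.
Proof. by rewrite /bern_exp -big_split; apply: eq_bigr => E _; rewrite mulrDr. Qed.

Lemma bern_exp_sum (I : finType) (P : pred I) J (F : I -> {set T} -> R) :
  bern_exp J (fun E => \sum_(i | P i) F i E) = \sum_(i | P i) bern_exp J (F i).
Proof. by rewrite /bern_exp exchange_big; apply: eq_bigr => E _; rewrite big_distrr. Qed.

Lemma bern_exp_cst J a : bern_exp J (fun _ => a) = a.
Proof.
elim: {J}_.+1 {-2}J (ltnSn #|J|) => // n IH J; have [->|[e eJ]] := set_0Vmem J.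
  by rewrite bern_exp0.
rewrite -(setD1K eJ) cardsU1 setD11 add1n ltnS => cJ.
rewrite bern_expU ?disjoints1 ?setD11 //.
by rewrite (eq_bern_exp (g := fun _ => a)) => [|E _]; rewrite ?bern_exp1 ?IH //; ring.
Qed.

Lemma bern_exp_restrict J K f : J \subset K ->
  (forall E, E \subset K -> f E = f (E :&: J)) -> bern_exp K f = bern_exp J f.
Proof.
move=> sJK fJ.
have dJ : [disjoint J & K :\: J] by rewrite disjoints_subset setCD subsetUr.
rewrite -(setID K J) (setIidPr sJK) bern_expU //; apply: eq_bern_exp => E1 s1.
rewrite -[RHS](bern_exp_cst (K :\: J)); apply: eq_bern_exp => E2 s2.
rewrite fJ; last by rewrite -(setID K J) (setIidPr sJK) setUSS.
by rewrite setIUl (setIidPl s1) (setI_subset_disjoint s2) ?setU0 // disjoint_sym.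
Qed.

Lemma bern_exp_prod (I : finType) (S : {set I}) (J : I -> {set T})
    (F : I -> {set T} -> R) :
  {in S &, forall i j, i != j -> [disjoint J i & J j]} ->
  (forall i E, i \in S -> F i E = F i (E :&: J i)) ->
  bern_exp (\bigcup_(i in S) J i) (fun E => \prod_(i in S) F i E)
  = \prod_(i in S) bern_exp (J i) (F i).
Proof.
elim: {S}_.+1 {-2}S (ltnSn #|S|) => // n IH S; have [->|[i iS]] := set_0Vmem S.
  by rewrite big_set0 bern_exp0 /= !big_set0.
rewrite -(setD1K iS) cardsU1 setD11 add1n ltnS => cS dJ FJ.
have dJ' : {in S :\ i &, forall j k, j != k -> [disjoint J j & J k]}.
  by move=> j k jS kS; apply: dJ; apply: setU1r.
have FJ' j E : j \in S :\ i -> F j E = F j (E :&: J j).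
  by move=> jS; apply/FJ/setU1r.
have dJi j : j \in S :\ i -> [disjoint J i & J j].
  move=> jS; apply: dJ; rewrite ?setU11 ?setU1r //.
  by rewrite eq_sym; case/setD1P: jS.
have dU : [disjoint J i & \bigcup_(j in S :\ i) J j] by apply/bigcup_disjoint.
rewrite !big_setU1 ?setD11 //= bern_expU // -(IH _ cS dJ' FJ') -bern_expZr.
apply: eq_bern_exp => E1 s1; rewrite -bern_expZl; apply: eq_bern_exp => E2 s2.
rewrite big_setU1 ?setD11 //=; congr (_ * _).
- rewrite FJ ?setU11 // setIUl (setIidPl s1) (setI_subset_disjoint s2) ?setU0 //.
  by rewrite disjoint_sym.
- apply: eq_bigr => j jS; rewrite FJ' // setIUl.
  by rewrite (setI_subset_disjoint s1 (dJi j jS)) set0U -FJ'.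
Qed.

Hypotheses (q_ge0 : 0 <= q) (q_le1 : q <= 1).

Lemma bern_weight_ge0 J E : 0 <= bern_weight J E.
Proof. by apply: prodr_ge0 => e _; case: ifP; rewrite ?subr_ge0. Qed.

Lemma ler_bern_exp J f g : (forall E, E \subset J -> f E <= g E) ->
  bern_exp J f <= bern_exp J g.
Proof. by move=> fg; apply: ler_sum => E sE; rewrite ler_wpM2l ?bern_weight_ge0 ?fg. Qed.

Lemma bern_exp_ge0 J f : (forall E, E \subset J -> 0 <= f E) -> 0 <= bern_exp J f.
Proof. by move=> f0; rewrite -(bern_exp_cst J 0); apply: ler_bern_exp. Qed.

Lemma bern_exp_count_lt (I : finType) (S : {set I}) (e : I -> T) K (s t : R) :
  {in S &, injective e} -> \bigcup_(i in S) [set e i] \subset K ->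
  0 < s <= 1 ->
  bern_exp K (fun E => (#|[set i in S | e i \in E]|%:R < t)%R%:R)
  <= expR (- (q * (1 - s) * #|S|%:R)) * s^-1 ^+ (Num.truncn t).+1.
Proof.
move=> inj_e sK s01; have /andP[s_gt0 s_le1] := s01.
apply: le_trans (ler_bern_exp (g := fun E =>
  s ^+ #|[set i in S | e i \in E]| * s^-1 ^+ (Num.truncn t).+1) _) _.
  by move=> E _; apply: lt_indicator_le.
rewrite bern_expZr; apply: ler_wpM2r; first by rewrite exprn_ge0 // invr_ge0 ltW.
have e_cover i : i \in S -> e i \in \bigcup_(j in S) [set e j].
  by move=> iS; apply/bigcupP; exists i; rewrite ?inE.
rewrite (bern_exp_restrict sK); last first.
  move=> E _; congr (_ ^+ _); apply: eq_card => i; rewrite !inE.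
  by case iS: (i \in S); rewrite //= e_cover ?andbT.
under eq_bern_exp do rewrite -prodr_if_card.
rewrite bern_exp_prod; last 2 first.
- by move=> i j iS jS ij; rewrite disjoints1 inE (inj_in_eq inj_e).
- by move=> i E _; rewrite inE set11 andbT.
under eq_bigr do rewrite bern_exp1 set11 in_set0 mulr1.
have -> : q * s + (1 - q) = 1 + - (q * (1 - s)) by ring.
have q1s : 0 <= (1 - q) * (1 - s) by rewrite mulr_ge0 // subr_ge0.
rewrite prodr_const; apply: le_trans (lerXn_expR _ _) _; first nra.
by rewrite mulNr.
Qed.

Lemma bern_exp_quarter (I : finType) (S : {set I}) (J : I -> {set T}) K
    (P : I -> pred {set T}) (n : nat) (r : R) :
  {in S &, forall i j, i != j -> [disjoint J i & J j]} ->
  \bigcup_(i in S) J i \subset K ->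
  (forall i E, i \in S -> P i E = P i (E :&: J i)) ->
  (forall i, i \in S -> bern_exp (J i) (fun E => (P i E)%:R) <= r) ->
  bern_exp K (fun E => (n <= 4 * #|[set i in S | P i E]|)%N%:R)
  <= (1 + 15 * r) ^+ #|S| / 2 ^+ n.
Proof.
move=> dJ sK PJ Pr.
apply: le_trans (ler_bern_exp (g := fun E =>
  16 ^+ #|[set i in S | P i E]| / 2 ^+ n) _) _.
  by move=> E _; apply: quarter_indicator_le.
rewrite bern_expZr; apply: ler_wpM2r; first by rewrite invr_ge0 exprn_ge0.
rewrite (bern_exp_restrict sK); last first.
  move=> E _; congr (_ ^+ _); apply: eq_card => i; rewrite !inE.
  case iS: (i \in S) => //=; rewrite PJ // [RHS]PJ // -setIA.
  by rewrite (setIidPr (bigcup_sup i iS)).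
under eq_bern_exp do rewrite -prodr_if_card.
rewrite bern_exp_prod => [||i E iS] //; last by rewrite PJ.
rewrite -prodr_const; apply: ler_prod => i iS.
rewrite (eq_bern_exp (g := fun E => 1 + 15 * (P i E)%:R)); last first.
  by move=> E _; case: (P i E) => /=; lra.
rewrite bern_expD bern_exp_cst bern_expZl lerD2l ler_pM2l ?Pr // andbT.
by rewrite addr_ge0 ?mulr_ge0 ?bern_exp_ge0.
Qed.

End BernoulliSubsets.

Lemma set2_eq_mem (T : finType) (u v x y : T) : [set u; v] = [set x; y] -> u = x \/ u = y.
Proof. by move/setP/(_ u); rewrite !inE eqxx => /esym/orP[]/eqP; [left|right]. Qed.

Lemma cards_sepC (T : finType) (S : {set T}) (P : pred T) :
  #|[set x in S | P x]| + #|[set x in S | ~~ P x]| = #|S|.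
Proof.
rewrite -(cardsID [set x | P x] S); congr (_ + _); apply: eq_card => x;
  by rewrite !inE andbC.
Qed.

Lemma card_pairs_sum (I J : finType) (A : {set I}) (C : {set J}) (good : I -> pred J) :
  #|[set x : I * J | [&& x.1 \in A, x.2 \in C & good x.1 x.2]]|
  = (\sum_(a in A) #|[set c in C | good a c]|)%N.
Proof.
rewrite -sum1_card (eq_bigl (fun x => (x.1 \in A) && ((x.2 \in C) && good x.1 x.2)));
  last by move=> x; rewrite inE.
rewrite -(pair_big_dep (mem A) (fun a c => (c \in C) && good a c) (fun _ _ => 1%N)) /=.
by apply: eq_bigr => a _; rewrite -sum1_card; apply: eq_bigl => c; rewrite inE.
Qed.

Lemma few_good_pairs_split (I J : finType) (A : {set I}) (C : {set J})
    (low : pred I) (bad : I -> pred J) : #|C| = #|A| ->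
  (2 * #|[set x : I * J | [&& x.1 \in A, x.2 \in C & ~~ bad x.1 x.2]]| <= #|A| ^ 2)%N ->
  (#|A| <= 4 * #|[set a in A | low a]|)%N \/
  exists2 a, a \in A & ~~ low a && (#|A| <= 4 * #|[set c in C | bad a c]|)%N.
Proof.
move=> cCA; rewrite (card_pairs_sum A C (fun a c => ~~ bad a c)) => few_good.
have [|few_low] := leqP; first by left.
right; apply/exists_inP; apply: contraLR few_good => /exists_inPn many_good.
set n := #|A| in cCA few_low many_good *.
have good_high a : a \in A -> ~~ low a -> (3 * n < 4 * #|[set c in C | ~~ bad a c]|)%N.
  move=> aA /negPf high; have := many_good a aA; rewrite high /= -ltnNge.
  by have := cards_sepC C (bad a); rewrite cCA; lia.
have high_sum : (#|[set a in A | ~~ low a]| * (3 * n).+1 <=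
                 4 * \sum_(a in A) #|[set c in C | ~~ bad a c]|)%N.
  rewrite big_distrr /= (bigID low) /= -sum_nat_const.
  rewrite (eq_bigl (fun a => (a \in A) && ~~ low a)); last by move=> a; rewrite inE.
  by apply: leq_trans (leq_addl _ _); apply: leq_sum => a /andP[aA /good_high]; apply.
have := cards_sepC A low; rewrite -/n -ltnNge; nia.
Qed.

Section Stars.
Variables (p : nat) (B : {set 'I_p}).
Implicit Types (u v : 'I_p) (E K : {set {set 'I_p}}).

Definition star u : {set {set 'I_p}} := \bigcup_(b in B) [set [set u; b]].

Definition nbhdB E u : {set 'I_p} := [set b in B | [set u; b] \in E].

Lemma mem_star u b : b \in B -> [set u; b] \in star u.
Proof. by move=> bB; apply/bigcupP; exists b; rewrite ?inE. Qed.

Lemma starP u e : reflect (exists2 b, b \in B & e = [set u; b]) (e \in star u).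
Proof.
apply: (iffP bigcupP) => -[b bB]; first by rewrite inE => /eqP; exists b.
by move=> ->; exists b; rewrite ?inE.
Qed.

Lemma star_inj u : u \notin B -> {in B &, injective (fun b => [set u; b])}.
Proof.
move=> uB b b' bB _ e; have /set2_eq_mem[//|bu] : [set b; u] = [set b'; u].
  by rewrite setUC e setUC.
by move: uB; rewrite -bu bB.
Qed.

Lemma star_pairs2 u : u \notin B -> star u \subset pairs2 p.
Proof.
move=> uB; apply/subsetP => _ /starP[b bB ->].
have ub : u != b by apply: contraNneq uB => ->.
by rewrite inE cards2 ub.
Qed.

Lemma disjoint_star u v : u \notin B -> u != v -> [disjoint star u & star v].
Proof.
move=> uB uv; rewrite disjoint_subset; apply/subsetP => _ /starP[b bB ->].
rewrite inE; apply/starP => -[b' b'B /set2_eq_mem[uv'|ub']].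
  by rewrite uv' eqxx in uv.
by move: uB; rewrite ub' b'B.
Qed.

Lemma nbhdB_setI E K u : star u \subset K -> nbhdB (E :&: K) u = nbhdB E u.
Proof.
move=> sK; apply/setP => b; rewrite !inE.
by case bB: (b \in B); rewrite //= (subsetP sK _ (mem_star u bB)) andbT.
Qed.

Lemma nbhdB_setUr E1 E2 u : [disjoint star u & E2] -> nbhdB (E1 :|: E2) u = nbhdB E1 u.
Proof.
move=> dE; apply/setP => b; rewrite !inE.
by case bB: (b \in B); rewrite //= (disjointFr dE (mem_star u bB)) orbF.
Qed.

Lemma nbhdB_setUl E1 E2 u : [disjoint star u & E1] -> nbhdB (E1 :|: E2) u = nbhdB E2 u.
Proof. by move=> dE; rewrite setUC nbhdB_setUr. Qed.

Lemma codeg_inE E a c0 : a \notin B -> c0 \notin B ->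
  codeg_in E B a c0 = #|nbhdB E a :&: nbhdB E c0|.
Proof.
move=> aB cB; apply: eq_card => b; rewrite !inE /adj.
case bB: (b \in B) => //=.
by rewrite (eq_sym a) (eq_sym c0) (memPn aB) ?(memPn cB) // andbACA andbb.
Qed.

Lemma nbhdB_sub E u : nbhdB E u \subset B.
Proof. by apply/subsetP => b; rewrite inE => /andP[]. Qed.

Lemma setI_nbhdB E1 E2 u v :
  nbhdB E1 u :&: nbhdB E2 v = [set b in nbhdB E1 u | [set v; b] \in E2].
Proof. by apply/setP => b; rewrite !inE; case: (b \in B). Qed.

End Stars.

Lemma gnp_prob_bern_exp (R : realType) p (q : R) (P : pred {set {set 'I_p}}) :
  gnp_prob q P = bern_exp q (pairs2 p) (fun E => (P E)%:R).
Proof.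
rewrite /gnp_prob /bern_exp big_mkcond [RHS]big_mkcond; apply: eq_bigr => E _.
by rewrite /gnp_mass /bern_weight; case: (P E); case: ifP; rewrite ?mulr1 ?mulr0.
Qed.

Section Tripartite.
Variables (R : realType) (p : nat) (A B C : {set 'I_p}).
Hypotheses (dAB : [disjoint A & B]) (dAC : [disjoint A & C]) (dBC : [disjoint B & C]).
Variables (q thr gam : R).
Hypotheses (q_ge0 : 0 <= q) (q_le1 : q <= 1).

Let notB_A a : a \in A -> a \notin B.
Proof. by move=> aA; rewrite (disjointFr dAB aA). Qed.

Let notB_C c : c \in C -> c \notin B.
Proof. by move=> cC; rewrite (disjointFl dBC cC). Qed.

Definition starsC : {set {set 'I_p}} := \bigcup_(c in C) star B c.

Local Notation low_degree E a := (#|nbhdB B E a|%:R < thr)%R.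

Local Notation low_codegree E a c := ((codeg_in E B a c)%:R < gam)%R.

Local Notation degree_rate :=
  (expR (- (q * (1 - 9/10) * #|B|%:R)) * (9/10)^-1 ^+ (Num.truncn thr).+1).

Local Notation codegree_rate :=
  (expR (- (q * (1 - 3/4) * thr)) * (3/4)^-1 ^+ (Num.truncn gam).+1).

Lemma many_low_degree_prob :
  bern_exp q (pairs2 p) (fun E => (#|A| <= 4 * #|[set a in A | low_degree E a]|)%N%:R)
  <= (1 + 15 * degree_rate) ^+ #|A| / 2 ^+ #|A|.
Proof.
apply: (bern_exp_quarter q_ge0 q_le1 (J := star B)).
- by move=> a a' aA _; apply/disjoint_star/notB_A.
- by apply/bigcupsP => a /notB_A; apply: star_pairs2.
- by move=> a E _; rewrite nbhdB_setI.
- move=> a /notB_A aB; apply: bern_exp_count_lt => //; first exact: star_inj.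
  by apply/andP; split; lra.
Qed.

Lemma low_codegree_prob a c E1 : a \in A -> c \in C -> thr <= #|nbhdB B E1 a|%:R ->
  bern_exp q (star B c) (fun E2 => (#|nbhdB B E1 a :&: nbhdB B E2 c|%:R < gam)%R%:R)
  <= codegree_rate.
Proof.
move=> aA cC high; have sNB := nbhdB_sub B E1 a.
under eq_bern_exp do rewrite setI_nbhdB.
apply: le_trans (bern_exp_count_lt q_ge0 q_le1 (s := 3/4) gam _ _ _) _.
- move=> x y /(subsetP sNB) xB /(subsetP sNB) yB.
  exact: star_inj (notB_C cC) x y xB yB.
- by apply/bigcupsP => b /(subsetP sNB) bB; rewrite sub1set mem_star.
- by apply/andP; split; lra.
apply: ler_wpM2r; first by rewrite exprn_ge0 // invr_ge0; lra.
by rewrite ler_expR lerN2 ler_wpM2l // mulr_ge0 //; lra.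
Qed.

Lemma many_low_codegree_prob a : a \in A ->
  bern_exp q (pairs2 p) (fun E =>
    (~~ low_degree E a && (#|A| <= 4 * #|[set c in C | low_codegree E a c]|)%N)%:R)
  <= (1 + 15 * codegree_rate) ^+ #|C| / 2 ^+ #|A|.
Proof.
move=> aA; set r := expR _ * _; have aB := notB_A aA.
have r_ge0 : 0 <= r by rewrite mulr_ge0 ?expR_ge0 ?exprn_ge0 ?invr_ge0 //; lra.
have bound_ge0 : 0 <= (1 + 15 * r) ^+ #|C| / 2 ^+ #|A|.
  by rewrite divr_ge0 ?exprn_ge0 //; lra.
have d_starsC : [disjoint star B a & starsC].
  apply/bigcup_disjoint => c cC; apply: disjoint_star => //.
  by apply: contraTneq cC => <-; rewrite (disjointFr dAC aA).
have sK : star B a :|: starsC \subset pairs2 p.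
  by rewrite subUset star_pairs2 //=; apply/bigcupsP => c /notB_C; apply: star_pairs2.
rewrite (bern_exp_restrict q sK); last first.
  move=> E _; set K := star B a :|: starsC.
  have -> : [set c in C | low_codegree (E :&: K) a c] = [set c in C | low_codegree E a c].
    apply/setP => c; rewrite !inE; case cC: (c \in C) => //=.
    rewrite !codeg_inE ?(notB_C cC) // !nbhdB_setI ?subsetUl //.
    by rewrite (subset_trans _ (subsetUr _ _)) // (bigcup_sup c cC).
  by rewrite nbhdB_setI ?subsetUl.
rewrite bern_expU // -(bern_exp_cst q (star B a) (_ / _)).
apply: (ler_bern_exp q_ge0 q_le1) => E1 sE1.
have [low|high] := ltP (#|nbhdB B E1 a|%:R) thr.
  rewrite (eq_bern_exp q (g := fun _ => 0)) ?bern_exp_cst // => E2 sE2.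
  by rewrite nbhdB_setUr ?low // (disjointWr sE2).
rewrite (eq_bern_exp q (g := fun E2 =>
  (#|A| <= 4 * #|[set c in C | (#|nbhdB B E1 a :&: nbhdB B E2 c|%:R < gam)%R]|)%N%:R));
  last first.
  move=> E2 sE2; rewrite nbhdB_setUr ?(disjointWr sE2) // ltNge high /=.
  suff -> : [set c in C | low_codegree (E1 :|: E2) a c]
         = [set c in C | (#|nbhdB B E1 a :&: nbhdB B E2 c|%:R < gam)%R] by [].
  apply/setP => c; rewrite !inE; case cC: (c \in C) => //=.
  have ca : c != a by apply: contraTneq cC => ->; rewrite (disjointFr dAC aA).
  rewrite codeg_inE ?(notB_C cC) // nbhdB_setUr ?(disjointWr sE2) // nbhdB_setUl //.
  by rewrite disjoint_sym (disjointWl sE1) //; apply: disjoint_star; rewrite // eq_sym.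
apply: (bern_exp_quarter q_ge0 q_le1 (J := star B)
  (P := fun c E2 => (#|nbhdB B E1 a :&: nbhdB B E2 c|%:R < gam)%R)) => //.
- by move=> c c' /notB_C cB _; apply: disjoint_star.
- by move=> c E _; rewrite nbhdB_setI.
- by move=> c cC; apply: low_codegree_prob.
Qed.

Lemma m_AC_small_prob_le : #|C| = #|A| ->
  gnp_prob q (fun E => (m_AC E A B C gam)%:R <= #|A|%:R ^+ 2 / 2 :> R)
  <= (1 + 15 * degree_rate) ^+ #|A| / 2 ^+ #|A|
     + #|A|%:R * ((1 + 15 * codegree_rate) ^+ #|A| / 2 ^+ #|A|).
Proof.
move=> cCA; rewrite gnp_prob_bern_exp.
apply: le_trans (ler_bern_exp q_ge0 q_le1 (g := fun E =>
  (#|A| <= 4 * #|[set a in A | low_degree E a]|)%N%:R + \sum_(a in A)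
  (~~ low_degree E a && (#|A| <= 4 * #|[set c in C | low_codegree E a c]|)%N)%:R) _) _.
  move=> E _; apply: ler_indicator => [|small]; first by rewrite addr_ge0 ?sumr_ge0.
  have few_good : (2 * #|[set x : 'I_p * 'I_p |
      [&& x.1 \in A, x.2 \in C & ~~ low_codegree E x.1 x.2]]| <= #|A| ^ 2)%N.
    rewrite -(ler_nat R) natrM natrX mulrC -ler_pdivlMr // (eq_card (B := [set x |
      [&& x.1 \in A, x.2 \in C & gam <= (codeg_in E B x.1 x.2)%:R]])) // => x.
    by rewrite !inE leNgt.
  case: (few_good_pairs_split (fun a => low_degree E a)
    (bad := fun a c => low_codegree E a c) cCA few_good) => [many_low|[a aA bad_a]].
    by rewrite many_low ler_wpDr ?sumr_ge0.
  by rewrite ler_wpDl // (bigD1 a aA) bad_a ler_wpDr ?sumr_ge0.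
rewrite bern_expD bern_exp_sum; apply: lerD; first exact: many_low_degree_prob.
rewrite mulr_natl -sumr_const; apply: ler_sum => a aA.
by have := many_low_codegree_prob aA; rewrite cCA.
Qed.

End Tripartite.

Section Numerics.
Variable R : realType.
Implicit Types (x s t : R).

Lemma expR_le_inv x (M : R) : 0 < M -> M <= 1 - x -> expR x <= M^-1.
Proof.
move=> M_gt0 le_M; rewrite -(ler_pM2r M_gt0) mulVf ?gt_eqF //.
apply: le_trans (ler_wpM2l (expR_ge0 x) le_M) _.
by rewrite -[X in _ <= X](expRxMexpNx_1 x) ler_wpM2l ?expR_ge0 ?expR_ge1Dx.
Qed.

Lemma exprV_truncn_le s t : 0 < s <= 1 -> 0 <= t ->
  s^-1 ^+ (Num.truncn t).+1 <= expR ((s^-1 - 1) * (t + 1)).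
Proof.
case/andP=> s_gt0 s_le1 t_ge0; have s1 : 0 <= s^-1 - 1 by rewrite subr_ge0 invf_ge1.
rewrite -[s^-1 in X in X <= _](addrNK 1) [_ + 1]addrC.
apply: le_trans (lerXn_expR _ _) _; first lra.
by rewrite ler_expR ler_wpM2l // -natr1 lerD2r truncn_le.
Qed.

Lemma degree_rate_le (q : R) (n : nat) : 0 <= q -> 6000 <= n%:R * q ->
  expR (- (q * (1 - 9/10) * n%:R)) * (9/10)^-1 ^+ (Num.truncn (4/5 * (n%:R * q))).+1
  <= 60^-1.
Proof.
move=> q_ge0 large; have t_ge0 : 0 <= 4/5 * (n%:R * q) by lra.
apply: le_trans (ler_wpM2l (expR_ge0 _) (exprV_truncn_le _ t_ge0)) _.
  by apply/andP; split; lra.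
rewrite -expRD invf_div; apply: expR_le_inv; first lra.
have -> : q * (1 - 9/10) * n%:R = n%:R * q / 10 by field.
lra.
Qed.

Lemma codegree_rate_le (q : R) (n : nat) : 0 <= q -> 6000 <= n%:R * q ^+ 2 ->
  expR (- (q * (1 - 3/4) * (4/5 * (n%:R * q))))
    * (3/4)^-1 ^+ (Num.truncn (n%:R * q ^+ 2 / 2)).+1 <= 60^-1.
Proof.
move=> q_ge0 large; have t_ge0 : 0 <= n%:R * q ^+ 2 / 2 by lra.
apply: le_trans (ler_wpM2l (expR_ge0 _) (exprV_truncn_le _ t_ge0)) _.
  by apply/andP; split; lra.
rewrite -expRD invf_div; apply: expR_le_inv; first lra.
have -> : q * (1 - 3/4) * (4/5 * (n%:R * q)) = n%:R * q ^+ 2 / 5 by field.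
lra.
Qed.

Lemma quarter_tail_le (r : R) (n : nat) : 0 <= r <= 60^-1 ->
  (1 + 15 * r) ^+ n / 2 ^+ n <= expR (- (n%:R / 4)).
Proof.
case/andP=> r_ge0 r_le; rewrite -expr_div_n.
have -> : - (n%:R / 4) = n%:R * - (1/4) :> R by field.
rewrite expRM_natl; apply: lerXn2r; rewrite ?nnegrE ?expR_ge0 //; first lra.
by apply: le_trans (expR_ge1Dx _); lra.
Qed.

Lemma tail_sum_le (n : nat) : (3 <= n)%N ->
  expR (- (n%:R / 4)) + n%:R * expR (- (n%:R / 4)) <= n%:R * expR (- (n%:R / 12)) :> R.
Proof.
move=> n_ge3; have n3 : (3 : R) <= n%:R by rewrite (ler_nat R 3 n).
have -> : expR (- (n%:R / 12)) = expR (- (n%:R / 4)) * expR (n%:R / 6) :> R.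
  by rewrite -expRD; congr expR; lra.
have e6_ge : 1 + n%:R <= n%:R * expR (n%:R / 6) :> R.
  have h := ler_wpM2l (ler0n R n) (expR_ge1Dx (n%:R / 6 : R)).
  by set x := n%:R in n3 h *; set E := expR _ in h *; nra.
set e := expR _; set e6 := expR _.
have -> : e + n%:R * e = (1 + n%:R) * e by ring.
by rewrite mulrCA [X in X <= _]mulrC ler_pM2l ?expR_gt0.
Qed.

End Numerics.

Lemma m_AC_small_prob (R : realType) (p n : nat) (A B C : {set 'I_p}) (q : R) :
  0 <= q <= 1 -> (3 <= n)%N -> 6000 <= n%:R * q ^+ 2 ->
  #|A| = n -> #|B| = n -> #|C| = n ->
  [disjoint A & B] -> [disjoint A & C] -> [disjoint B & C] ->
  gnp_prob q (fun E => (m_AC E A B C (n%:R * q ^+ 2 / 2))%:R <= n%:R ^+ 2 / 2 :> R)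
  <= n%:R * expR (- (n%:R / 12)).
Proof.
move=> /andP[q_ge0 q_le1] n_ge3 large cA cB cC dAB dAC dBC.
have large_nq : 6000 <= n%:R * q.
  by apply: le_trans large _; rewrite expr2 mulrA ler_piMr ?mulr_ge0.
have := m_AC_small_prob_le dAB dAC dBC (4/5 * (n%:R * q)) (n%:R * q ^+ 2 / 2)
  q_ge0 q_le1 (etrans cC (esym cA)).
rewrite cA cB => /le_trans; apply.
apply: le_trans (lerD (quarter_tail_le n _)
  (ler_wpM2l (ler0n _ n) (quarter_tail_le n _))) _.
- by rewrite degree_rate_le // andbT mulr_ge0 ?expR_ge0 ?exprn_ge0 // invr_ge0; lra.
- by rewrite codegree_rate_le // andbT mulr_ge0 ?expR_ge0 ?exprn_ge0 // invr_ge0; lra.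
exact: tail_sum_le.
Qed.

Lemma sqr_ge_of_powR_ge (R : realType) (K eps D x y : R) :
  0 < K -> 0 < eps -> 1 <= x -> D ^+ 2 / K ^+ 4 < x ->
  K * x `^ (3/4 + eps) <= y -> D * x <= y ^+ 2.
Proof.
move=> K_gt0 eps_gt0 x_ge1 x_large le_y.
have x34 : K * x `^ (3/4) <= y.
  by apply: le_trans le_y; rewrite ler_pM2l // ler_powR // lerDl ltW.
have x34_4 : (x `^ (3/4)) ^+ 4 = x ^+ 3.
  by rewrite -powR_mulrn ?powR_ge0 // -powRrM (_ : 3/4 * 4%:R = 3%:R) ?powR_mulrn //; lra.
have y4 : K ^+ 4 * x ^+ 3 <= y ^+ 4.
  have Kx_ge0 : 0 <= K * x `^ (3/4) by rewrite mulr_ge0 ?powR_ge0 ?ltW.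
  by rewrite -x34_4 -exprMn lerXn2r // nnegrE (le_trans Kx_ge0).
have K4 : 0 < K ^+ 4 by rewrite exprn_gt0.
have D2 : D ^+ 2 * x ^+ 2 <= y ^+ 4.
  apply: le_trans y4; rewrite !exprS expr0 !mulr1.
  move: x_large; rewrite ltr_pdivrMr // mulrC => /ltW; nra.
have := sqr_ge0 y; nra.
Qed.

Lemma edge_density_bounds (R : realType) (P x : R) :
  0 < P -> 0 <= x <= P -> 18000 * P <= x ^+ 2 ->
  0 <= x / P <= 1 /\ 6000 <= P / 3 * (x / P) ^+ 2.
Proof.
move=> P_gt0 /andP[x_ge0 x_le] large; split.
  by rewrite divr_ge0 ?(ltW P_gt0) //= ler_pdivrMr ?mul1r.
have -> : P / 3 * (x / P) ^+ 2 = x ^+ 2 / (3 * P) by field; rewrite gt_eqF.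
by rewrite ler_pdivlMr ?mulr_gt0 //; lra.
Qed.

Theorem lemma7 (R : realType) (eps' K : R) (c : nat -> R) (N : nat) :
  0 < eps' -> 0 < K ->
  (forall p : nat, (N <= p)%N ->
     K * (p%:R `^ (3 / 4 + eps')) <= c p /\ c p <= p%:R) ->
  exists P0 : nat, forall p : nat, (P0 <= p)%N -> (3 %| p)%N ->
    forall A B C : {set 'I_p},
      #|A| = (p %/ 3)%N -> #|B| = (p %/ 3)%N -> #|C| = (p %/ 3)%N ->
      [disjoint A & B] -> [disjoint A & C] -> [disjoint B & C] ->
      A :|: B :|: C = [set: 'I_p] ->
      let gamma := c p ^+ 2 / (6 * p%:R) in
      gnp_prob (c p / p%:R)
        (fun E => (m_AC E A B C gamma)%:R <= (p%:R / 3) ^+ 2 / 2 :> R)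
      <= (p%:R / 3) * expR (- (p%:R / 36)).
Proof.
move=> eps_gt0 K_gt0 hc.
exists (maxn N (maxn 9 (Num.truncn (18000 ^+ 2 / K ^+ 4)).+1)) => p.
rewrite !geq_max => /and3P[pN p_ge9 p_large] /dvdnP[n p3n] A B C.
have n_ge3 : (3 <= n)%N by move: p_ge9; rewrite p3n; clear; lia.
have p_div3 : (p %/ 3)%N = n by rewrite p3n mulnK.
rewrite p_div3 => cA cB cC dAB dAC dBC _; cbv zeta.
have [c_ge c_le] := hc p pN.
have p_ge1 : 1 <= p%:R :> R by rewrite ler1n; move: p_ge9; clear; lia.
have c_sq : 18000 * p%:R <= c p ^+ 2.
  apply: sqr_ge_of_powR_ge K_gt0 eps_gt0 p_ge1 _ c_ge.
  by apply: lt_le_trans (truncnS_gt _) _; rewrite ler_nat.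
have c_ge0 : 0 <= c p := le_trans (mulr_ge0 (ltW K_gt0) (powR_ge0 _ _)) c_ge.
have p_gt0 : 0 < p%:R :> R := lt_le_trans ltr01 p_ge1.
have [q01 large] := edge_density_bounds p_gt0 (introT andP (conj c_ge0 c_le)) c_sq.
have np : n%:R = p%:R / 3 :> R by rewrite p3n natrM; field.
rewrite (_ : c p ^+ 2 / (6 * p%:R) = n%:R * (c p / p%:R) ^+ 2 / 2); last first.
  by rewrite np; field; rewrite gt_eqF.
rewrite -np (_ : p%:R / 36 = n%:R / 12); last by rewrite np; field.
by apply: m_AC_small_prob => //; rewrite np.
Qed.
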